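(* Let $W_0\in\mathcal{W}$ and let $S(W)\in\mathbb{R}^{|I||J|}$ be the global similarity vector obtained by stacking $S_1(W),\dots,S_{|I|}(W)$. Put $s_0=S(W_0)$, $s_{0i}=S_i(W_0)$, $s_{0i,j}=(S_i(W_0))_j$. Then the Jacobian $S_0=dS_{W_0}\in\mathbb{R}^{|I||J|\times|I||J|}$ of $S$ at $W_0$ is the block matrix $(A_{ik}(W_0))_{i,k\in I}$ with $|J|\times|J|$ blocks given, for $V_k\in T_0$, by $$A_{ik}(W_0)(V_k)=\begin{cases}w_{ik}\,\Pi_{s_{0i}}\Big(\frac{V_k}{W_{0k}}\Big), & k\in\mathcal{N}_i,\\ 0,& k\notin\mathcal{N}_i,\end{cases}$$ and for $k\in\mathcal{N}_i$ the entries are, for $j,l\in J$, $$\big(A_{ik}(W_0)\big)_{jl}=w_{ik}\begin{cases}(1-s_{0i,j})\dfrac{s_{0i,j}}{W_{0k,j}}, & j=l,\\[2mm] -s_{0i,j}\dfrac{s_{0i,l}}{W_{0k,l}}, & j\neq l.\end{cases}$$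
   Context: Let $G=(I,E)$ be a finite undirected graph with neighborhoods $\mathcal{N}_i=\{k\in I: ik\in E\}$, and weights $w_{ik}>0$ with $\sum_{k\in\mathcal{N}_i}w_{ik}=1$. Let $J$ be a finite label set. Operations on vectors are componentwise. $\mathcal{S}=\{p\in\mathbb{R}^{|J|}: p_j>0,\ \langle\mathbb{1},p\rangle=1\}$, $T_0=\{v:\langle\mathbb{1},v\rangle=0\}$. For $p\in\mathcal{S}$, $\Pi_p(z)=(\mathrm{Diag}(p)-pp^\top)z$ and $\exp_p(z)=\frac{p\,e^{z}}{\langle p,e^{z}\rangle}$ for $z\in\mathbb{R}^{|J|}$. $\mathcal{W}=\mathcal{S}^{|I|}$ with points $W=(W_i)_{i\in I}$; for $W_0\in\mathcal{W}$, $W_{0k}\in\mathcal{S}$ denotes its $k$-th block and $W_{0k,j}$ its $j$-th entry. Given distance vectors $D_i\in\mathbb{R}^{|J|}$ and $\rho>0$, $L_i(W_i)=\frac{W_i e^{-D_i/\rho}}{\langle W_i,e^{-D_i/\rho}\rangle}$; the geometric mean is $\mathcal{G}^w_i(W)=\exp_{W_i}\Big(\log\frac{\prod_{k\in\mathcal{N}_i}W_k^{w_{ik}}}{W_i}\Big)$; the similarity vectors are $S_i(W)=\mathcal{G}^w_i(L(W))$ where $L(W)=(L_i(W_i))_{i\in I}$. *)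

From HB Require Import structures.
From mathcomp Require Import all_boot all_order all_algebra.
From mathcomp Require Import all_classical all_reals all_analysis.
Set Implicit Arguments. Unset Strict Implicit. Unset Printing Implicit Defensive.
Import Order.TTheory GRing.Theory Num.Theory.
Import numFieldNormedType.Exports.
Local Open Scope ring_scope.

(* Index sets: I = 'I_m (nodes), J = 'I_n (labels).  Points W of the
   ambient space R^{|I| x |J|} are matrices 'M[R]_(m, n); row i of W is W_i. *)

Section Defs.
Variable R : realType.

Definition in_simplex n (p : 'rV[R]_n) : Prop :=
  (forall j, 0 < p 0 j) /\ \sum_j p 0 j = 1.

Definition in_T0 n (v : 'rV[R]_n) : Prop := \sum_j v 0 j = 0.

(* Pi_p(z) = (Diag(p) - p p^T) z *)
Definition Pi n (p z : 'rV[R]_n) : 'rV[R]_n :=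
  \row_j (p 0 j * z 0 j - p 0 j * \sum_l p 0 l * z 0 l).

Definition expm n (p z : 'rV[R]_n) : 'rV[R]_n :=
  \row_j (p 0 j * expR (z 0 j) / \sum_l p 0 l * expR (z 0 l)).

Definition Lik n (rho : R) (Di Wi : 'rV[R]_n) : 'rV[R]_n :=
  \row_j (Wi 0 j * expR (- Di 0 j / rho) /
          \sum_l Wi 0 l * expR (- Di 0 l / rho)).

Definition Lmat m n (rho : R) (D W : 'M[R]_(m, n)) : 'M[R]_(m, n) :=
  \matrix_(i, j) (Lik rho (row i D) (row i W)) 0 j.

Definition geomean m n (E : rel 'I_m) (w : 'M[R]_m) (W : 'M[R]_(m, n))
  (i : 'I_m) : 'rV[R]_n :=
  expm (row i W)
    (\row_j ln ((\prod_(k < m | E i k) (W k j) `^ (w i k)) / W i j)).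

Definition Smat m n (E : rel 'I_m) (w : 'M[R]_m) (rho : R)
  (D W : 'M[R]_(m, n)) : 'M[R]_(m, n) :=
  \matrix_(i, j) (geomean E w (Lmat rho D W) i) 0 j.

Definition Ablock m n (E : rel 'I_m) (w : 'M[R]_m) (rho : R)
  (D W0 : 'M[R]_(m, n)) (i k : 'I_m) (v : 'rV[R]_n) : 'rV[R]_n :=
  if E i k then
    w i k *: Pi (row i (Smat E w rho D W0)) (\row_j (v 0 j / W0 k j))
  else 0.

End Defs.

From HB Require Import structures.
From mathcomp Require Import all_boot all_order all_algebra.
From mathcomp Require Import all_classical all_reals all_analysis.
From mathcomp Require Import ring.

(* On positive arguments the similarity map is a row-wise softmax:
   S(W) = softmax (sim_logit W) with
   sim_logit W i j = sum_(k in N_i) w_ik (ln W_kj - D_kj / rho),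
   because the normalisations of the likelihoods L_k and of exp_(W_i) only
   shift each row of the logits by a constant, which the softmax ignores.
   The differential of the softmax at z is h |-> Pi_(softmax z)(h) row by row,
   that of sim_logit at W0 is V |-> sum_(k in N_i) w_ik V_k / W0_k, and the
   linearity of Pi splits their composite into the blocks A_ik. *)

Set Implicit Arguments. Unset Strict Implicit. Unset Printing Implicit Defensive.
Import Order.TTheory GRing.Theory Num.Theory.
Import numFieldNormedType.Exports.
Local Open Scope ring_scope.

Section IsDiff.
Context {R : numFieldType} {V W : normedModType R}.

Lemma near_eq_is_diff (f g df : V -> W) x :
  (\forall y \near x, f y = g y) -> is_diff x f df -> is_diff x g df.
Proof.
move=> fg [dfx <-].
have dg : g \o shift x = cst (g x) + 'd f x +o_ 0 id.
  apply/eqaddoP => e e0.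
  have /eqaddoP /(_ e e0) := diff_locally dfx.
  have fg0 : \forall h \near 0, f (h + x) = g (h + x).
    by move: fg; rewrite (near_shift 0 x) /= subr0.
  apply: filterS2 fg0 => h /= fgh.
  by rewrite !fctE /= fgh (nbhs_singleton fg).
have dfg : 'd g x = 'd f x :> (V -> W) := diff_unique (diff_continuous dfx) dg.
apply: DiffDef => //.
apply/diff_locallyP; rewrite dfg; split => //.
exact: diff_continuous dfx.
Qed.

Lemma is_diff_sum (I : Type) (r : seq I) (P : pred I) (f df : I -> V -> W) x :
  (forall i, P i -> is_diff x (f i) (df i)) ->
  is_diff x (fun y => \sum_(i <- r | P i) f i y)
            (fun v => \sum_(i <- r | P i) df i v).
Proof.
move=> dfi; rewrite -!fct_sumE.
by elim/big_ind2 : _ => // [|F dF G dG]; [exact: is_diff_cst | exact: is_diffD].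
Qed.

Lemma is_diffZl (k dk : V -> R) (c : W) x :
  is_diff x k dk -> is_diff x (fun y => k y *: c) (fun v => dk v *: c).
Proof.
move=> [dkx <-]; apply: DiffDef; first exact: differentiableZl.
by rewrite diffZl.
Qed.

Lemma is_diffV (f df : V -> R) x : is_diff x f df -> f x != 0 ->
  is_diff x (fun y => (f y)^-1) (fun v => - (f x) ^- 2 * df v).
Proof.
move=> [dfx <-] fx0; apply: DiffDef; first exact: differentiableV.
by rewrite diffV.
Qed.

Lemma is_diff_linear (f : {linear V -> W}) x : continuous f -> is_diff x f f.
Proof.
by move=> fc; apply: DiffDef; [exact: linear_differentiable | exact: diff_lin].
Qed.

Lemma is_diff_comp_derive (f df : V -> R) (g : R -> R) g' x :
  is_diff x f df -> is_derive (f x) 1 g g' ->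
  is_diff x (fun y => g (f y)) (fun v => g' * df v).
Proof.
move=> dfx dg.
have gdiff : differentiable g (f x) by apply/derivable1_diffP; exact: ex_derive.
have dgx : is_diff (f x) g ( *%R^~ g').
  by apply: DiffDef; rewrite // diff1E // derive1E; case: dg => _ ->.
apply: is_diff_eq (is_diff_comp dfx dgx) _.
by apply/funext => v /=; rewrite mulrC.
Qed.

End IsDiff.

Section MatrixDiff.
Context {R : realFieldType} {V : normedModType R} {m n : nat}.

Lemma is_diff_mx_entry (A : 'M[R]_(m, n)) i j :
  is_diff A (fun B : 'M[R]_(m, n) => B i j) (fun B => B i j).
Proof.
have entry_linear : linear (fun B : 'M[R]_(m, n) => B i j).
  by move=> a B C; rewrite !mxE.
pose entry : {linear 'M[R]_(m, n) -> R} :=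
  HB.pack (fun B : 'M[R]_(m, n) => B i j)
    (GRing.isLinear.Build _ _ _ _ _ entry_linear).
apply: (@is_diff_linear _ _ _ entry A); exact: coord_continuous.
Qed.

Lemma is_diff_mx (f df : V -> 'M[R]_(m, n)) x :
  (forall i j, is_diff x (fun y => f y i j) (fun v => df v i j)) ->
  is_diff x f df.
Proof.
move=> dfij.
have sum_deltaE (g : V -> 'M[R]_(m, n)) :
    g = fun y => \sum_i \sum_j g y i j *: delta_mx i j.
  by apply/funext => y; exact: matrix_sum_delta.
rewrite [f]sum_deltaE [df]sum_deltaE.
by apply: is_diff_sum => i _; apply: is_diff_sum => j _; exact: is_diffZl.
Qed.

Lemma near_mx_gt0 (A : 'M[R]_(m, n)) : (forall i j, 0 < A i j) ->
  \forall B \near A, forall i j, 0 < (B : 'M[R]_(m, n)) i j.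
Proof.
move=> A_gt0.
apply: (@filter_forall _ _ (fun i B => forall j, 0 < B i j) (nbhs A) _) => i.
apply: (@filter_forall _ _ (fun j B => 0 < B i j) (nbhs A) _) => j.
exact: cvgr_gt _ (@coord_continuous _ m n i j A) _ (A_gt0 i j).
Qed.

End MatrixDiff.

Section Projection.
Context {R : realType}.

Lemma Pi_is_linear n (p : 'rV[R]_n) : linear (Pi p).
Proof.
move=> a u v; apply/rowP => j; rewrite !mxE.
have -> : \sum_l p 0 l * (a *: u + v) 0 l =
          a * \sum_l p 0 l * u 0 l + \sum_l p 0 l * v 0 l.
  rewrite mulr_sumr -big_split; apply: eq_bigr => l _.
  by rewrite !mxE mulrDr mulrCA.
ring.
Qed.

Lemma Pi_delta_mx n (p : 'rV[R]_n) l j :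
  Pi p (delta_mx 0 l) 0 j =
  (if j == l then (1 - p 0 j) * p 0 j else - p 0 j * p 0 l).
Proof.
rewrite !mxE (bigD1 l) //= big1 => [|l' /negbTE nl'l]; last first.
  by rewrite !mxE nl'l mulr0.
rewrite !mxE !eqxx /= mulr1 addr0.
by case: eqVneq => [->|_]; rewrite /= ?mulr1 ?mulr0; ring.
Qed.

End Projection.

HB.instance Definition _ (R : realType) (n : nat) (p : 'rV[R]_n) :=
  GRing.isLinear.Build R _ _ _ (@Pi R n p) (@Pi_is_linear R n p).

Section Softmax.
Context {R : realType}.

Definition softmax {m n} (z : 'M[R]_(m, n)) : 'M[R]_(m, n) :=
  \matrix_(i, j) (expR (z i j) / \sum_l expR (z i l)).

Lemma softmax_shift m n (z : 'M[R]_(m, n)) (c : 'I_m -> R) :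
  softmax (\matrix_(i, j) (z i j + c i)) = softmax z.
Proof.
apply/matrixP => i j; rewrite !mxE.
under eq_bigr do rewrite mxE expRD.
by rewrite expRD -mulr_suml invfM mulrACA divff ?mulr1 // gt_eqF ?expR_gt0.
Qed.

Lemma is_diff_softmax m n (z : 'M[R]_(m, n)) :
  is_diff z softmax (fun h => \matrix_i Pi (row i (softmax z)) (row i h)).
Proof.
apply: is_diff_mx => i j.
pose Z (y : 'M[R]_(m, n)) := \sum_l expR (y i l).
have dexp l : is_diff z (fun y => expR (y i l)) (fun h => expR (z i l) * h i l).
  exact: is_diff_comp_derive (is_diff_mx_entry z i l) (is_derive_expR _).
have dZ : is_diff z Z (fun h => \sum_l expR (z i l) * h i l).
  by apply: is_diff_sum => l _; exact: dexp.
have Zz_gt0 : 0 < Z z by rewrite /Z (bigD1 j) //= ltr_pwDl ?expR_gt0 ?sumr_ge0.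
have dZV := is_diffV dZ (lt0r_neq0 Zz_gt0).
rewrite (_ : (fun y => softmax y i j) =
             (fun y : 'M[R]_(m, n) => expR (y i j)) * (fun y => (Z y)^-1));
  last by apply/funext => y; rewrite mxE.
apply: is_diff_eq (is_diffM (dexp j) dZV) _; apply/funext => h; rewrite !mxE.
have -> : \sum_l row i (softmax z) 0 l * row i h 0 l =
          (Z z)^-1 * \sum_l expR (z i l) * h i l.
  by rewrite mulr_sumr; apply: eq_bigr => l _; rewrite !mxE; ring.
by rewrite /Z /= !fctE /GRing.scale /= expr2 invfM; ring.
Qed.

End Softmax.

Section Similarity.
Context {R : realType}.

Lemma geomean_softmax m n (E : rel 'I_m) (w : 'M[R]_m) (W : 'M[R]_(m, n)) i :
  (forall k j, 0 < W k j) ->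
  geomean E w W i =
  row i (softmax (\matrix_(i, j) \sum_(k < m | E i k) w i k * ln (W k j))).
Proof.
move=> W_gt0.
have unnormalizedE l :
    W i l * expR (ln ((\prod_(k < m | E i k) W k l `^ w i k) / W i l)) =
    expR (\sum_(k < m | E i k) w i k * ln (W k l)).
  have prod_gt0 : 0 < \prod_(k < m | E i k) W k l `^ w i k.
    by apply: prodr_gt0 => k _; rewrite powR_gt0.
  rewrite lnK ?posrE ?divr_gt0 // mulrC divfK ?gt_eqF // expR_sum.
  by apply: eq_bigr => k _; rewrite /powR gt_eqF // mulrC.
apply/rowP => j; rewrite !mxE unnormalizedE.
by congr (_ / _); apply: eq_bigr => l _; rewrite !mxE unnormalizedE.
Qed.

Section Likelihood.
Variables (n : nat) (rho : R) (Di Wi : 'rV[R]_n).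
Hypothesis Wi_gt0 : forall j, 0 < Wi 0 j.

Let lik_norm := \sum_l Wi 0 l * expR (- Di 0 l / rho).

Let lik_norm_gt0 (j : 'I_n) : 0 < lik_norm.
Proof.
rewrite /lik_norm (bigD1 j) //= ltr_pwDl ?mulr_gt0 ?expR_gt0 ?sumr_ge0 // => l _.
by rewrite mulr_ge0 ?ltW ?expR_gt0.
Qed.

Lemma Lik_gt0 j : 0 < Lik rho Di Wi 0 j.
Proof. by rewrite mxE divr_gt0 ?mulr_gt0 ?expR_gt0 ?(lik_norm_gt0 j). Qed.

Lemma ln_Lik j :
  ln (Lik rho Di Wi 0 j) = ln (Wi 0 j) - Di 0 j / rho - ln lik_norm.
Proof.
rewrite mxE ln_div ?posrE ?mulr_gt0 ?expR_gt0 ?(lik_norm_gt0 j) //.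
by rewrite lnM ?posrE ?expR_gt0 // expRK mulNr.
Qed.

End Likelihood.

Section SimilarityMap.
Variables (m n : nat) (E : rel 'I_m) (w : 'M[R]_m) (rho : R) (D : 'M[R]_(m, n)).

Definition sim_logit (W : 'M[R]_(m, n)) : 'M[R]_(m, n) :=
  \matrix_(i, j) \sum_(k < m | E i k) w i k * (ln (W k j) - D k j / rho).

Lemma Smat_softmax (W : 'M[R]_(m, n)) : (forall k j, 0 < W k j) ->
  Smat E w rho D W = softmax (sim_logit W).
Proof.
move=> W_gt0.
have rowW_gt0 k j : 0 < row k W 0 j by rewrite mxE.
have L_gt0 k j : 0 < Lmat rho D W k j by rewrite mxE; exact: Lik_gt0.
pose c i := \sum_(k < m | E i k) w i k *
             ln (\sum_l row k W 0 l * expR (- row k D 0 l / rho)).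
apply/matrixP => i j; rewrite mxE geomean_softmax // -(softmax_shift _ c) mxE.
congr (softmax _ i j); apply/matrixP => i' j'; rewrite !mxE /c.
rewrite -big_split; apply: eq_bigr => k _.
by rewrite mxE ln_Lik // !mxE /= mulrBr subrK.
Qed.

Lemma is_diff_sim_logit (W0 : 'M[R]_(m, n)) : (forall k j, 0 < W0 k j) ->
  is_diff W0 sim_logit
    (fun V => \matrix_(i, j) \sum_(k < m | E i k) w i k * (V k j / W0 k j)).
Proof.
move=> W0_gt0; apply: is_diff_mx => i j.
have dterm k :
    is_diff W0 (fun W : 'M[R]_(m, n) => w i k * (ln (W k j) - D k j / rho))
               (fun V => w i k * (V k j / W0 k j)).
  have dln := is_diff_comp_derive (is_diff_mx_entry W0 k j)
                                  (is_derive1_ln (W0_gt0 k j)).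
  have dcst := is_diff_cst (D k j / rho) W0.
  apply: is_diff_eq (is_diffZ (w i k) (is_diffB dln dcst)) _.
  apply/funext => V.
  by rewrite !fctE /GRing.scale /= (_ : 0 V = 0) // subr0 [_^-1 * _]mulrC.
rewrite (_ : (fun W => sim_logit W i j) =
             fun W => \sum_(k < m | E i k) w i k * (ln (W k j) - D k j / rho));
  last by apply/funext => W; rewrite mxE.
apply: is_diff_eq (is_diff_sum _ (fun k (_ : E i k) => dterm k)) _.
by apply/funext => V; rewrite mxE.
Qed.

Lemma sum_Ablock (W0 V : 'M[R]_(m, n)) i :
  \sum_k Ablock E w rho D W0 i k (row k V) =
  Pi (row i (Smat E w rho D W0))
     (\row_j \sum_(k < m | E i k) w i k * (V k j / W0 k j)).
Proof.
rewrite /Ablock -big_mkcond /=.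
under eq_bigr do rewrite -linearZ /=.
rewrite -linear_sum; congr Pi; apply/rowP => j.
by rewrite summxE mxE; apply: eq_bigr => k _; rewrite !mxE.
Qed.

Lemma Ablock_delta_mx (W0 : 'M[R]_(m, n)) i k l j : E i k ->
  let s := Smat E w rho D W0 in
  Ablock E w rho D W0 i k (delta_mx 0 l) 0 j =
  w i k * (if j == l then (1 - s i j) * (s i j / W0 k j)
           else - s i j * (s i l / W0 k l)).
Proof.
move=> Eik s; rewrite /Ablock Eik -/s.
have -> : \row_j' ((delta_mx 0 l : 'rV[R]_n) 0 j' / W0 k j') =
          (W0 k l)^-1 *: delta_mx 0 l.
  apply/rowP => j'; rewrite !mxE eqxx /=.
  by case: (eqVneq j' l) => [->|_]; rewrite /GRing.scale /= ?mulr1 ?mulr0 ?mul0r ?div1r.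
rewrite linearZ /= scalerA [LHS]mxE Pi_delta_mx !mxE.
by case: eqVneq => [->|_]; rewrite /GRing.scale /=; ring.
Qed.

End SimilarityMap.
End Similarity.

Theorem proposition4p4 (R : realType) (m n : nat)
  (E : rel 'I_m) (w : 'M[R]_m) (D : 'M[R]_(m, n)) (rho : R)
  (W0 : 'M[R]_(m, n)) :
  (forall i k, E i k = E k i) ->
  (forall i k, E i k -> 0 < w i k) ->
  (forall i, \sum_(k < m | E i k) w i k = 1) ->
  0 < rho ->
  (forall i, in_simplex (row i W0)) ->
  let S := Smat E w rho D in
  let s0 := S W0 in
  [/\ differentiable S W0,
      (forall V : 'M[R]_(m, n), (forall k, in_T0 (row k V)) ->
         forall i, row i ('d S W0 V) = \sum_(k < m) Ablock E w rho D W0 i k (row k V))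
    & (forall i k, E i k -> forall j l : 'I_n,
         (Ablock E w rho D W0 i k (delta_mx 0 l)) 0 j =
         w i k * (if j == l then (1 - s0 i j) * (s0 i j / W0 k j)
                  else - s0 i j * (s0 i l / W0 k l)))].
Proof.
move=> _ _ _ _ W0_simplex S s0.
have W0_gt0 k j : 0 < W0 k j by have [/(_ j)] := W0_simplex k; rewrite mxE.
have [dS dSE] : is_diff W0 S (fun V => \matrix_i Pi (row i s0)
                   (\row_j \sum_(k < m | E i k) w i k * (V k j / W0 k j))).
  apply: (near_eq_is_diff (f := softmax \o sim_logit E w rho D)).
    by apply: filterS (near_mx_gt0 W0_gt0) => W W_gt0; rewrite /S Smat_softmax.
  apply: is_diff_eq
    (is_diff_comp (is_diff_sim_logit E w rho D W0_gt0) (is_diff_softmax _)) _.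
  apply/funext => V /=.
  rewrite /s0 /S Smat_softmax //; apply/row_matrixP => i; rewrite !rowK.
  by congr Pi; apply/rowP => j; rewrite !mxE.
split=> // [V _ i|i k Eik j l]; last exact: Ablock_delta_mx.
by rewrite dSE rowK sum_Ablock.
Qed.
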